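(* Let $a,b,c,n_1,n_2,n_3,\ell$ be integers with $n_1a+n_2b+n_3c=0$ and $n_1^2+n_2^2+n_3^2=\ell^2$, and put $u'=(a,b,c)$, $n=(n_1,n_2,n_3)$. Then there exists $v=(a',b',c')\in\mathbb{Z}^3$ such that $\ell u'$ and $v$ define a lattice square in the plane with normal $n$; that is, $v\cdot n=0$, $v\cdot(\ell u')=0$ and $|v|=|\ell u'|$.
   Context: $\cdot$ and $|\cdot|$ denote the standard dot product and Euclidean norm in $\mathbb{R}^3$. *)

From Stdlib Require Import ZArith.
Open Scope Z_scope.

Definition dot3 (x y : Z * Z * Z) : Z :=
  let '(x1, x2, x3) := x in let '(y1, y2, y3) := y in
  x1 * y1 + x2 * y2 + x3 * y3.

Definition norm2 (x : Z * Z * Z) : Z := dot3 x x.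

Definition scale3 (k : Z) (x : Z * Z * Z) : Z * Z * Z :=
  let '(x1, x2, x3) := x in (k * x1, k * x2, k * x3).

(* The witness is the cross product n x u'.  It is orthogonal to n and to u',
   hence to l u', and Lagrange's identity |n x u'|^2 = |n|^2 |u'|^2 - (n . u')^2
   gives |n x u'|^2 = l^2 |u'|^2 = |l u'|^2 because n . u' = 0 and |n|^2 = l^2. *)

From Stdlib Require Import ZArith.
Open Scope Z_scope.

Definition cross3 (x y : Z * Z * Z) : Z * Z * Z :=
  let '(x1, x2, x3) := x in let '(y1, y2, y3) := y in
  (x2 * y3 - x3 * y2, x3 * y1 - x1 * y3, x1 * y2 - x2 * y1).

Lemma dot3_cross3_l (x y : Z * Z * Z) : dot3 (cross3 x y) x = 0.
Proof. destruct x as [[x1 x2] x3], y as [[y1 y2] y3]; unfold dot3, cross3; ring. Qed.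

Lemma dot3_cross3_r (x y : Z * Z * Z) : dot3 (cross3 x y) y = 0.
Proof. destruct x as [[x1 x2] x3], y as [[y1 y2] y3]; unfold dot3, cross3; ring. Qed.

Lemma dot3_scale3_r (k : Z) (x y : Z * Z * Z) :
  dot3 x (scale3 k y) = k * dot3 x y.
Proof. destruct x as [[x1 x2] x3], y as [[y1 y2] y3]; unfold dot3, scale3; ring. Qed.

Lemma norm2_scale3 (k : Z) (x : Z * Z * Z) :
  norm2 (scale3 k x) = k ^ 2 * norm2 x.
Proof. destruct x as [[x1 x2] x3]; unfold norm2, dot3, scale3; ring. Qed.

Lemma norm2_cross3 (x y : Z * Z * Z) :
  norm2 (cross3 x y) = norm2 x * norm2 y - dot3 x y ^ 2.
Proof.
  destruct x as [[x1 x2] x3], y as [[y1 y2] y3]; unfold norm2, dot3, cross3; ring.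
Qed.

Theorem theorem2p3 (a b c n1 n2 n3 l : Z) :
  n1 * a + n2 * b + n3 * c = 0 ->
  n1 ^ 2 + n2 ^ 2 + n3 ^ 2 = l ^ 2 ->
  exists v : Z * Z * Z,
    dot3 v (n1, n2, n3) = 0 /\
    dot3 v (scale3 l (a, b, c)) = 0 /\
    norm2 v = norm2 (scale3 l (a, b, c)).
Proof.
  intros n_perp_u norm_n.
  assert (norm2_n : norm2 (n1, n2, n3) = l ^ 2)
    by (rewrite <- norm_n; unfold norm2, dot3; ring).
  exists (cross3 (n1, n2, n3) (a, b, c)); split; [|split].
  - apply dot3_cross3_l.
  - rewrite dot3_scale3_r, dot3_cross3_r; ring.
  - rewrite norm2_cross3, norm2_scale3, norm2_n.
    unfold dot3; rewrite n_perp_u; ring.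
Qed.
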